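(* Let $\mathcal{X}\subset\mathbb{R}^2$ and let $\mathbf{f}=(f_1,\ldots,f_p)^\top:\mathcal{X}\to\mathbb{R}^p$ have linearly independent component functions (regression model $\mu(\mathbf{x})=\mathbf{f}^\top(\mathbf{x})\boldsymbol\theta$). Let $t:\mathcal{X}\to\mathbb{R}$ be a function with range $\mathcal{T}$, and for $t\in\mathcal{T}$ let $\widetilde{\mathcal{X}}(t)=\{\mathbf{x}\in\mathcal{X}:t(\mathbf{x})=t\}$ and let $\widetilde{\mathbf{f}}_t=(\widetilde f_{1t},\ldots,\widetilde f_{p_t,t})^\top:\widetilde{\mathcal{X}}(t)\to\mathbb{R}^{p_t}$ be a vector of functions that are linearly independent on $\widetilde{\mathcal{X}}(t)$ and span the same linear space as the restrictions of $f_1,\ldots,f_p$ to $\widetilde{\mathcal{X}}(t)$ (the conditional model given $t$). If a design $\xi$ on $\mathcal{X}$ is admissible in the class of all designs on $\mathcal{X}$ for the model with regression vector $\mathbf{f}$, then for every $t\in\mathcal{T}$ with $\xi_t(t)>0$ the conditional design $\xi_{\mathbf{x}|t}$ is admissible in the class $\Xi_t$ of all designs on $\widetilde{\mathcal{X}}(t)$ for the conditional model with regression vector $\widetilde{\mathbf{f}}_t$.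
   Context: A design on a set $S$ is a probability measure on $S$ with finite support. For the model with regression vector $\mathbf{f}$ on $\mathcal{X}$, the information matrix of $\xi$ is $\mathbf{M}(\xi)=\int\mathbf{f}\mathbf{f}^\top d\xi$; $\xi_1$ is admissible if there is no design $\xi_2$ on $\mathcal{X}$ with $\mathbf{M}(\xi_2)\neq\mathbf{M}(\xi_1)$ and $\mathbf{M}(\xi_2)-\mathbf{M}(\xi_1)$ nonnegative definite. Analogously, for the conditional model the information matrix of a design $\eta$ on $\widetilde{\mathcal{X}}(t)$ is $\mathbf{M}_t(\eta)=\int_{\widetilde{\mathcal{X}}(t)}\widetilde{\mathbf{f}}_t\widetilde{\mathbf{f}}_t^\top d\eta$, and admissibility in $\Xi_t$ is defined in the same way with $\mathbf{M}_t$ in place of $\mathbf{M}$. For a design $\xi$ on $\mathcal{X}$, $\xi_t(t)=\xi(\widetilde{\mathcal{X}}(t))$, and if $\xi_t(t)>0$ the conditional design is the probability measure $\xi_{\mathbf{x}|t}(A)=\xi(A\cap\widetilde{\mathcal{X}}(t))/\xi_t(t)$ on $\widetilde{\mathcal{X}}(t)$. *)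

From mathcomp Require Import all_boot all_order all_algebra.
Set Implicit Arguments. Unset Strict Implicit. Unset Printing Implicit Defensive.
Import Order.TTheory GRing.Theory Num.Theory.
Local Open Scope ring_scope.

Section Designs.
Variable R : realFieldType.
Local Notation pt := (R * R)%type.

(* A design on S: a probability measure with finite support, given by its
   (duplicate-free) support s and weights w, positive on s, summing to 1. *)
Definition is_design (S : pt -> Prop) (s : seq pt) (w : pt -> R) : Prop :=
  [/\ uniq s, (forall x, x \in s -> S x /\ 0 < w x) & \sum_(x <- s) w x = 1].

Definition info_mx (p : nat) (f : pt -> 'cV[R]_p) (s : seq pt) (w : pt -> R)
  : 'M[R]_p := \sum_(x <- s) w x *: (f x *m (f x)^T).

Definition nnd (p : nat) (A : 'M[R]_p) : Prop :=
  forall v : 'cV[R]_p, 0 <= ((v^T *m A *m v) 0 0).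

Definition admissible (S : pt -> Prop) (p : nat) (f : pt -> 'cV[R]_p)
  (s : seq pt) (w : pt -> R) : Prop :=
  is_design S s w /\
  ~ (exists (s2 : seq pt) (w2 : pt -> R), is_design S s2 w2 /\
       info_mx f s2 w2 != info_mx f s w /\ nnd (info_mx f s2 w2 - info_mx f s w)).

Definition lin_indep_on (S : pt -> Prop) (p : nat) (f : pt -> 'cV[R]_p) : Prop :=
  forall c : 'rV[R]_p, (forall x, S x -> c *m f x = 0) -> c = 0.

Definition same_span (S : pt -> Prop) (p q : nat)
  (f : pt -> 'cV[R]_p) (g : pt -> 'cV[R]_q) : Prop :=
  (exists A : 'M[R]_(p, q), forall x, S x -> f x = A *m g x) /\
  (exists B : 'M[R]_(q, p), forall x, S x -> g x = B *m f x).

Definition level_set (X : pt -> Prop) (t : pt -> R) (t0 : R) : pt -> Prop :=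
  fun x => X x /\ t x = t0.

Definition range_on (X : pt -> Prop) (t : pt -> R) (t0 : R) : Prop :=
  exists2 x, X x & t x = t0.

Definition marg_t (s : seq pt) (w : pt -> R) (t : pt -> R) (t0 : R) : R :=
  \sum_(x <- s | t x == t0) w x.

Definition cond_supp (s : seq pt) (t : pt -> R) (t0 : R) : seq pt :=
  [seq x <- s | t x == t0].
Definition cond_w (s : seq pt) (w : pt -> R) (t : pt -> R) (t0 : R) : pt -> R :=
  fun x => w x / marg_t s w t t0.

End Designs.

From mathcomp Require Import all_boot all_order all_algebra.
Set Implicit Arguments. Unset Strict Implicit. Unset Printing Implicit Defensive.
Import Order.TTheory GRing.Theory Num.Theory.
Local Open Scope ring_scope.

(* Admissibility only depends on the linear span of the regressors, since two
   spanning families have information matrices related by congruences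
   M_f = A M_g A^T and M_g = B M_f B^T, which preserve both nonnegative
   definiteness and vanishing of differences.  So it suffices to show that the
   conditional design is admissible for the restriction of f to the level set.
   If a design eta on the level set improved on it, replacing the part of xi on
   the level set by xi_t(t) * eta would give a design on X whose information
   matrix exceeds M(xi) by xi_t(t) (M(eta) - M(xi_{x|t})), contradicting the
   admissibility of xi. *)

Section Admissibility.
Variable R : realFieldType.
Local Notation pt := (R * R)%type.

Lemma design_supp (S : pt -> Prop) (s : seq pt) (w : pt -> R) :
  is_design S s w -> {in s, forall x, S x}.
Proof. by case=> _ s_S _ x /s_S[]. Qed.

Lemma nnd_mulmx_tr (p q : nat) (A : 'M[R]_(p, q)) (M : 'M[R]_q) :
  nnd M -> nnd (A *m M *m A^T).
Proof.
move=> nndM v; have := nndM (A^T *m v).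
by rewrite trmx_mul trmxK !mulmxA.
Qed.

Lemma nndZ (p : nat) (a : R) (M : 'M[R]_p) : 0 <= a -> nnd M -> nnd (a *: M).
Proof. by move=> a_ge0 nndM v; rewrite -scalemxAr -scalemxAl mxE mulr_ge0. Qed.

Lemma info_mx_mulmx (p q : nat) (f : pt -> 'cV[R]_p) (g : pt -> 'cV[R]_q)
    (A : 'M[R]_(p, q)) (s : seq pt) (w : pt -> R) :
  {in s, forall x, f x = A *m g x} ->
  info_mx f s w = A *m info_mx g s w *m A^T.
Proof.
move=> fAg; rewrite /info_mx mulmx_sumr mulmx_suml big_seq [RHS]big_seq.
apply: eq_bigr => x sx; rewrite fAg // trmx_mul.
by rewrite -scalemxAr -scalemxAl !mulmxA.
Qed.

Lemma info_mx_subr_mulmx (p q : nat) (f : pt -> 'cV[R]_p)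
    (g : pt -> 'cV[R]_q) (A : 'M[R]_(p, q)) (s1 s2 : seq pt) (w1 w2 : pt -> R) :
  {in s1, forall x, f x = A *m g x} -> {in s2, forall x, f x = A *m g x} ->
  info_mx f s2 w2 - info_mx f s1 w1
    = A *m (info_mx g s2 w2 - info_mx g s1 w1) *m A^T.
Proof.
move=> fAg1 fAg2.
by rewrite mulmxBr mulmxBl -(info_mx_mulmx w1 fAg1) -(info_mx_mulmx w2 fAg2).
Qed.

Lemma admissible_same_span (S : pt -> Prop) (p q : nat)
    (f : pt -> 'cV[R]_p) (g : pt -> 'cV[R]_q) (s : seq pt) (w : pt -> R) :
  same_span S f g -> admissible S f s w -> admissible S g s w.
Proof.
move=> [[A fAg] [B gBf]] [xi_design xi_adm]; split => //.
move=> [s2 [w2 [eta_design [Mg_ne Mg_nnd]]]].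
have s_S := design_supp xi_design; have s2_S := design_supp eta_design.
have gBf1 : {in s, forall x, g x = B *m f x} by move=> x /s_S/gBf.
have gBf2 : {in s2, forall x, g x = B *m f x} by move=> x /s2_S/gBf.
have fAg1 : {in s, forall x, f x = A *m g x} by move=> x /s_S/fAg.
have fAg2 : {in s2, forall x, f x = A *m g x} by move=> x /s2_S/fAg.
apply: xi_adm; exists s2, w2; split => //; split.
- rewrite -subr_eq0; apply: contra Mg_ne => /eqP Mf_eq.
  by rewrite -subr_eq0 (info_mx_subr_mulmx _ _ gBf1 gBf2) Mf_eq mulmx0 mul0mx.
- rewrite (info_mx_subr_mulmx _ _ fAg1 fAg2); exact: nnd_mulmx_tr.
Qed.

Section Conditional.
Variables (X : pt -> Prop) (s : seq pt) (w : pt -> R) (t : pt -> R) (t0 : R).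
Local Notation m := (marg_t s w t t0).

Definition splice_supp (s2 : seq pt) : seq pt :=
  [seq x <- s | t x != t0] ++ s2.
Definition splice_w (w2 : pt -> R) : pt -> R :=
  fun x => if t x == t0 then m * w2 x else w x.

Hypotheses (xi_design : is_design X s w) (m_gt0 : 0 < m).

Lemma cond_design :
  is_design (level_set X t t0) (cond_supp s t t0) (cond_w s w t t0).
Proof.
have [s_uniq s_X _] := xi_design.
split; first exact: filter_uniq.
- move=> x; rewrite mem_filter => /andP[/eqP tx sx].
  have [Xx wx_gt0] := s_X x sx.
  by rewrite /cond_w divr_gt0.
- by rewrite /cond_supp big_filter -mulr_suml mulfV ?gt_eqF.
Qed.

Lemma splice_design (s2 : seq pt) (w2 : pt -> R) :
  is_design (level_set X t t0) s2 w2 ->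
  is_design X (splice_supp s2) (splice_w w2).
Proof.
have [s_uniq s_X w_sum] := xi_design.
move=> eta_design; have [s2_uniq s2_level w2_sum] := eta_design.
have t_s2 : {in s2, forall x, t x = t0} by move=> x /(design_supp eta_design)[].
split.
- rewrite cat_uniq filter_uniq // s2_uniq andbT /=.
  by apply/hasPn => x /t_s2 tx; rewrite mem_filter tx eqxx.
- move=> x; rewrite mem_cat => /orP[|s2x].
    by rewrite mem_filter /splice_w => /andP[/negbTE-> /s_X].
  have [[Xx tx] w2x_gt0] := s2_level x s2x.
  by rewrite /splice_w tx eqxx mulr_gt0.
- rewrite big_cat big_filter -w_sum [RHS](bigID (fun x => t x == t0)) /= [RHS]addrC.
  congr (_ + _); first by apply: eq_bigr => x /negbTE tx; rewrite /splice_w tx.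
  rewrite big_seq (eq_bigr (fun x => m * w2 x)) -?big_seq.
    by rewrite -mulr_sumr w2_sum mulr1.
  by move=> x /t_s2 tx; rewrite /splice_w tx eqxx.
Qed.

Lemma info_mx_splice_subr (p : nat) (f : pt -> 'cV[R]_p)
    (s2 : seq pt) (w2 : pt -> R) :
  {in s2, forall x, t x = t0} ->
  info_mx f (splice_supp s2) (splice_w w2) - info_mx f s w
    = m *: (info_mx f s2 w2 - info_mx f (cond_supp s t t0) (cond_w s w t t0)).
Proof.
move=> t_s2.
have info_cond : \sum_(x <- s | t x == t0) w x *: (f x *m (f x)^T)
                 = m *: info_mx f (cond_supp s t t0) (cond_w s w t t0).
  rewrite /info_mx big_filter scaler_sumr; apply: eq_bigr => x _.
  by rewrite scalerA mulrCA mulfV ?gt_eqF ?mulr1.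
have info_s2 : info_mx f s2 (splice_w w2) = m *: info_mx f s2 w2.
  rewrite /info_mx scaler_sumr big_seq [RHS]big_seq; apply: eq_bigr => x s2x.
  by rewrite /splice_w t_s2 // eqxx scalerA.
rewrite {2}/info_mx (bigID (fun x => t x == t0)) /= info_cond.
rewrite /splice_supp /info_mx big_cat /= -/(info_mx f s2 _) info_s2 big_filter.
rewrite (eq_bigr (fun x => w x *: (f x *m (f x)^T))); last first.
  by move=> x /negbTE tx; rewrite /splice_w tx.
by rewrite [X in _ - X]addrC opprD addrACA subrr add0r scalerBr.
Qed.

Lemma admissible_cond (p : nat) (f : pt -> 'cV[R]_p) :
  admissible X f s w ->
  admissible (level_set X t t0) f (cond_supp s t t0) (cond_w s w t t0).
Proof.
move=> [_ xi_adm]; split; first exact: cond_design.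
move=> [s2 [w2 [eta_design [M_ne M_nnd]]]].
have t_s2 : {in s2, forall x, t x = t0} by move=> x /(design_supp eta_design)[].
apply: xi_adm; exists (splice_supp s2), (splice_w w2).
rewrite -subr_eq0 info_mx_splice_subr //.
split; first exact: splice_design.
split; last exact: nndZ (ltW m_gt0) M_nnd.
by rewrite scaler_eq0 gt_eqF //= subr_eq0.
Qed.

End Conditional.
End Admissibility.

Theorem theorem3 (R : realFieldType) (X : R * R -> Prop) (p : nat)
  (f : R * R -> 'cV[R]_p) (t : R * R -> R)
  (pt : R -> nat) (ft : forall t0 : R, R * R -> 'cV[R]_(pt t0)) :
  lin_indep_on X f ->
  (forall t0, range_on X t t0 ->
     lin_indep_on (level_set X t t0) (ft t0) /\
     same_span (level_set X t t0) f (ft t0)) ->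
  forall (s : seq (R * R)) (w : R * R -> R),
    admissible X f s w ->
    forall t0, range_on X t t0 -> 0 < marg_t s w t t0 ->
      admissible (level_set X t t0) (ft t0) (cond_supp s t t0) (cond_w s w t t0).
Proof.
move=> _ cond_model s w xi_adm t0 t0_range m_gt0.
have [_ span_ft] := cond_model t0 t0_range.
have [xi_design _] := xi_adm.
exact: admissible_same_span span_ft (admissible_cond xi_design m_gt0 xi_adm).
Qed.
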